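(* In the setting below, assume that $g(x)$ and $l(x)$ are self-reciprocal. If $\gcd\big(r_{22}(x),\ g_{11}(x)\bar g_{12}(x)-g_{12}(x)\bar g_{11}(x)\big)\neq 1$, then $C$ is not symplectic LCD.
   Context: Let $q$ be a prime power, $F=\mathbb{F}_q$, $m\ge1$ with $\gcd(q,m)=1$, and $R=F[x]/\langle x^m-1\rangle$; elements of $R$ are represented by polynomials of degree $<m$ and identified with their coefficient vectors in $F^m$. A quasi-cyclic code of length $2m$ and index $2$ is an $R$-submodule $C\subseteq R^2$. For $a,b\in R$ let $\langle a,b\rangle_e$ be the standard dot product of their coefficient vectors. The symplectic form on $R^2$ is $\langle (a_1,a_2),(b_1,b_2)\rangle_s=\langle a_1,b_2\rangle_e-\langle a_2,b_1\rangle_e$; $C$ is symplectic LCD if $C\cap C^{\perp_s}=\{0\}$. For a nonzero polynomial $f$ of degree $k$, $f^*(x)=x^kf(x^{-1})$; $f$ is self-reciprocal if $f^*=\alpha f$ for some $\alpha\in F$. For a polynomial $f$ of degree at most $m$, $\bar f(x)=x^m f(x^{-1})$. Suppose $C$ is generated as an $R$-module by $(g_{11}(x),g_{12}(x))$ and $(0,g_{22}(x))$, where $g_{11},g_{12},g_{22}\in F[x]$ satisfy: $g_{11}\mid x^m-1$, $g_{22}\mid x^m-1$, $\deg g_{12}<\deg g_{22}$, and $g_{11}g_{22}\mid (x^m-1)g_{12}$. Define $g=\gcd(g_{11},g_{22})$, $l=(x^m-1)/\mathrm{lcm}(g_{11},g_{22})$, $g_{22}=g\,g_{22}'$, $r_{22}=\gcd(g_{22}',g_{22}'^*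 )$. *)

From HB Require Import structures.
From mathcomp Require Import all_boot all_order all_algebra.
Set Implicit Arguments. Unset Strict Implicit. Unset Printing Implicit Defensive.
Import GRing.Theory.
Local Open Scope ring_scope.

Section QCDefs.
Variable F : fieldType.

(* reciprocal f^*(x) = x^deg f * f(1/x), for f nonzero *)
Definition recip (f : {poly F}) : {poly F} :=
  \poly_(i < size f) f`_((size f).-1 - i).

Definition self_reciprocal (f : {poly F}) : Prop :=
  f != 0 /\ exists alpha : F, recip f = alpha *: f.

(* bar f (x) = x^m f(1/x), for deg f <= m *)
Definition polybar (m : nat) (f : {poly F}) : {poly F} :=
  \poly_(i < m.+1) f`_(m - i).

(* lcm of polynomials (up to a nonzero scalar, like gcdp) *)
Definition lcmp (p q : {poly F}) : {poly F} := (p * q) %/ gcdp p q.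

Definition edot (m : nat) (a b : {poly F}) : F := \sum_(i < m) a`_i * b`_i.

Definition sympl (m : nat) (u v : {poly F} * {poly F}) : F :=
  edot m u.1 v.2 - edot m u.2 v.1.

(* elements of R = F[x]/<x^m-1>, represented as polynomials of degree < m *)
Definition inR (m : nat) (a : {poly F}) : bool := (size a <= m)%N.

Definition qc_code (m : nat) (g11 g12 g22 : {poly F})
    (v : {poly F} * {poly F}) : Prop :=
  exists a b : {poly F},
    v = ((a * g11) %% ('X^m - 1), (a * g12 + b * g22) %% ('X^m - 1)).

Definition symplectic_LCD (m : nat) (C : {poly F} * {poly F} -> Prop) : Prop :=
  forall v, C v -> inR m v.1 -> inR m v.2 ->
    (forall c, C c -> sympl m c v = 0) -> v = (0, 0).
End QCDefs.

From HB Require Import structures.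
From mathcomp Require Import all_boot all_order all_algebra all_field.
From mathcomp Require Import fingroup cyclic ring zify.
Set Implicit Arguments.
Unset Strict Implicit.
Unset Printing Implicit Defensive.

Import GRing.Theory FinRing.Theory.
Local Open Scope ring_scope.

(* Work modulo N = x^m - 1, where the substitution p |-> p(x^(m-1)) realises
   x |-> x^-1 and is congruent to the bar of any polynomial of degree <= m.
   The symplectic product of c and v is the coefficient of x^m in
   c1 bar(v2) - c2 bar(v1), so it vanishes as soon as N divides that product.
   Let r be a nonconstant common factor of r22 and e = g11 bar(g12) - g12 bar(g11),
   t = N / r and a = t(x^-1).  The vector v = (a g11, a g12) of C satisfies
   c1 bar(v2) - c2 bar(v1) = t (alpha e - beta g22 g11(x^-1)) = 0 mod N for every
   c = alpha (g11, g12) + beta (0, g22), because r divides e and g22.  If v were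
   zero, r would divide g11(x^-1); but r also divides g22'(x^-1), since bar(g22')
   is a multiple of g22'^*, while g11 and g22' are coprime because x^m - 1 is
   squarefree when gcd(q, m) = 1. *)

Reserved Notation "p = q %[modp N ]"
  (format "'[hv ' p '/'  =  q '/'  %[modp  N ] ']'").
Notation "p = q %[modp N ]" := (N %| p - q) : ring_scope.

Section PolyCongruence.
Variables (F : fieldType) (N : {poly F}).
Implicit Types p q u : {poly F}.

Lemma eqmodp_refl p : p = p %[modp N].
Proof. by rewrite subrr dvdp0. Qed.

Lemma eqmodp_trans p q u : p = q %[modp N] -> q = u %[modp N] -> p = u %[modp N].
Proof.
move=> pq qu; have -> : p - u = (p - q) + (q - u) by ring.
exact: dvdp_add.
Qed.

Lemma eqmodpB p1 q1 p2 q2 :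
  p1 = q1 %[modp N] -> p2 = q2 %[modp N] -> p1 - p2 = q1 - q2 %[modp N].
Proof.
move=> h1 h2; have -> : (p1 - p2) - (q1 - q2) = (p1 - q1) - (p2 - q2) by ring.
exact: dvdp_sub.
Qed.

Lemma eqmodpM p1 q1 p2 q2 :
  p1 = q1 %[modp N] -> p2 = q2 %[modp N] -> p1 * p2 = q1 * q2 %[modp N].
Proof.
move=> h1 h2; have -> : p1 * p2 - q1 * q2 = p1 * (p2 - q2) + (p1 - q1) * q2 by ring.
by apply: dvdp_add; [apply: dvdp_mull | apply: dvdp_mulr].
Qed.

Lemma eqmodpMl u p q : p = q %[modp N] -> u * p = u * q %[modp N].
Proof. by rewrite -mulrBr; apply: dvdp_mull. Qed.

Lemma modp_eqmodp p : p %% N = p %[modp N].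
Proof.
have -> : p %% N - p = - (p %/ N) * N by rewrite {2}(divp_eq p N); ring.
exact: dvdp_mull.
Qed.

Lemma eqmodp_dvdp p q : p = q %[modp N] -> (N %| p) = (N %| q).
Proof. by move=> pq; rewrite -{1}(subrK q p) dvdp_addr. Qed.

Lemma eqmodp_sum (I : finType) (f g : I -> {poly F}) :
  (forall i, f i = g i %[modp N]) -> \sum_i f i = \sum_i g i %[modp N].
Proof.
move=> fg; rewrite -sumrB; apply: (big_ind (fun p => N %| p)) => [|x y|i _].
- exact: dvdp0.
- exact: dvdp_add.
- exact: fg.
Qed.

Lemma comp_poly_eqmodp u p q : p = q %[modp N] -> u \Po p = u \Po q %[modp N].
Proof.
move=> pq; elim/poly_ind: u => [|u c IHu]; first by rewrite !comp_poly0 subrr dvdp0.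
rewrite !comp_poly_MXaddC.
have -> : (u \Po p) * p + c%:P - ((u \Po q) * q + c%:P) =
          (u \Po p) * p - (u \Po q) * q by ring.
exact: eqmodpM.
Qed.

End PolyCongruence.

Section InverseVariable.
Variables (F : fieldType) (m : nat).
Local Notation N := ('X^m - 1 : {poly F}).
Implicit Types f p q : {poly F}.

Lemma Xn_eqmodp a b : (a = b %[mod m])%N -> 'X^a = 'X^b %[modp N].
Proof.
suff Xn_mod c : 'X^c = 'X^(c %% m) %[modp N].
  move=> ab; have -> : 'X^a - 'X^b = ('X^a - 'X^(a %% m)) - ('X^b - 'X^(b %% m)) :> {poly F}.
    by rewrite ab; ring.
  exact: dvdp_sub.
rewrite {1}(divn_eq c m) exprD mulnC exprM -{2}['X^(c %% m)]mul1r -mulrBl.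
by rewrite dvdp_mulr // -{2}(expr1n _ (c %/ m)) subrXX dvdp_mulIl.
Qed.

Lemma polybar_recip f : (size f <= m.+1)%N ->
  polybar m f = 'X^(m.+1 - size f) * recip f.
Proof.
move=> f_small; apply/polyP => k; rewrite coefXnM /polybar /recip !coef_poly.
set s := size f in f_small *.
case: (ltnP k (m.+1 - s)) => k_low.
  by case: ltnP => // k_le; rewrite nth_default // -/s; lia.
case: (ltnP k m.+1) => k_m; case: ltnP => k_f //; try lia.
by congr (_`_ _); lia.
Qed.

Definition xinv p := p \Po 'X^(m.-1).

Hypothesis m_gt0 : (0 < m)%N.

Lemma size_Xnsub1 : size N = m.+1.
Proof. by rewrite size_XnsubC. Qed.

Lemma Xnsub1_neq0 : N != 0.
Proof. by rewrite -size_poly_eq0 size_Xnsub1. Qed.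

Lemma size_modp_Xnsub1 p : (size (p %% N)%R <= m)%N.
Proof. by rewrite -ltnS -size_Xnsub1 ltn_modpN0 // Xnsub1_neq0. Qed.

Lemma xinv_dvdp p : N %| p -> N %| xinv p.
Proof.
case/dvdpP=> q ->; rewrite /xinv comp_polyM dvdp_mull //.
rewrite comp_polyB comp_polyC comp_Xn_poly -exprM polyC1 -(expr0 'X).
by apply: Xn_eqmodp; rewrite modnMl mod0n.
Qed.

Lemma xinv_eqmodp p q : p = q %[modp N] -> xinv p = xinv q %[modp N].
Proof. by move/xinv_dvdp; rewrite /xinv comp_polyB. Qed.

Lemma xinvK_eqmodp p : xinv (xinv p) = p %[modp N].
Proof.
rewrite /xinv -comp_polyA comp_Xn_poly -exprM.
rewrite -{2}[p]comp_polyXr; apply: comp_poly_eqmodp; apply: (@Xn_eqmodp _ 1).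
rewrite -(prednK m_gt0); set k := m.-1.
by apply/eqP; rewrite -(eqn_modDr k) -mulnSr add1n modnMl modnn.
Qed.

Lemma polybar_eqmodp f : (size f <= m.+1)%N -> polybar m f = xinv f %[modp N].
Proof.
move=> f_small.
have -> : polybar m f = \sum_(i < m.+1) f`_i *: 'X^(m - i).
  rewrite /polybar poly_def (reindex_inj rev_ord_inj) /=.
  by apply: eq_bigr => i _; rewrite subSS subKn // -ltnS.
have -> : xinv f = \sum_(i < m.+1) f`_i *: 'X^(m.-1 * i).
  rewrite /xinv comp_polyE (big_ord_widen _ (fun i => f`_i *: 'X^(m.-1) ^+ i) f_small).
  rewrite big_mkcond /=; apply: eq_bigr => i _.
  by case: ltnP => [_ | f_i]; rewrite -?exprM // nth_default // !scale0r.
apply: eqmodp_sum => i; rewrite -scalerBr -mul_polyC dvdp_mull //.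
apply: Xn_eqmodp; apply/eqP; rewrite -(eqn_modDr i).
have := ltn_ord i; rewrite ltnS => le_i_m.
rewrite subnK // [(_ + i)%N](_ : _ = i * m)%N ?modnn ?modnMl //.
by rewrite -{2}(mul1n i) -mulnDl addn1 prednK // mulnC.
Qed.

Lemma dvdp_xinv_recip r f : (size f <= m.+1)%N ->
  r %| N -> r %| recip f -> r %| xinv f.
Proof.
move=> f_small r_N r_rec.
have r_bar : r %| polybar m f by rewrite polybar_recip // dvdp_mull.
by rewrite -(dvdp_subr _ r_bar) (dvdp_trans r_N (polybar_eqmodp f_small)).
Qed.

End InverseVariable.

Section SymplecticForm.
Variables (F : fieldType) (m : nat).
Local Notation N := ('X^m - 1 : {poly F}).
Implicit Types u w : {poly F}.

Lemma edot_polybar u w : (size u <= m)%N -> (size w <= m)%N ->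
  edot m u w = (u * polybar m w)`_m.
Proof.
move=> u_small w_small.
rewrite coefM big_ord_recr /= (nth_default _ u_small) mul0r addr0.
apply: eq_bigr => i _; rewrite /polybar coef_poly.
have := ltn_ord i; rewrite ifT; last lia.
by move=> lt_i_m; congr (_ * _`_ _); lia.
Qed.

Hypothesis m_gt0 : (0 < m)%N.

(* P = (x^m - 1) Q with deg Q < m, so that P_m = Q_0 = - P_0. *)
Lemma coefn_dvdp_Xnsub1 P : N %| P -> (size P <= m + m)%N -> P`_0 = 0 -> P`_m = 0.
Proof.
case/dvdpP=> Q ->{P} size_PQ.
have Q_small : (size Q <= m)%N.
  have [-> | Q_neq0] := eqVneq Q 0; first by rewrite size_poly0.
  move: size_PQ; rewrite size_mul ?Xnsub1_neq0 // size_XnsubC // addnS /=.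
  by set s := size Q; lia.
rewrite mulrBr mulr1 !coefB !coefMXn ltnn subnn m_gt0 sub0r => /eqP.
by rewrite oppr_eq0 => /eqP ->; rewrite (nth_default _ Q_small) subr0.
Qed.

Lemma sympl_eq0 (c1 c2 v1 v2 : {poly F}) :
  (size c1 <= m)%N -> (size c2 <= m)%N -> (size v1 <= m)%N -> (size v2 <= m)%N ->
  c1 * polybar m v2 = c2 * polybar m v1 %[modp N] ->
  sympl m (c1, c2) (v1, v2) = 0.
Proof.
move=> c1_small c2_small v1_small v2_small N_dvd.
rewrite /sympl /= !edot_polybar // -coefB; apply: coefn_dvdp_Xnsub1 => //.
  have size_bar u w : (size u <= m)%N -> (size (u * polybar m w)%R <= m + m)%N.
    move=> u_small; apply: leq_trans (size_polyMleq _ _) _.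
    have : (size (polybar m w) <= m.+1)%N by apply: size_poly.
    lia.
  by rewrite (leq_trans (size_polyD _ _)) // size_polyN geq_max !size_bar.
rewrite coefB !coef0M /polybar !coef_poly /= subn0.
by rewrite (nth_default _ v1_small) (nth_default _ v2_small) !mulr0 subr0.
Qed.

End SymplecticForm.

Lemma dvdp_deriv_sqr (F : fieldType) (s p : {poly F}) : s * s %| p -> s %| p^`().
Proof.
case/dvdpP=> q ->; rewrite !derivM.
apply: dvdp_add; first by rewrite dvdp_mull // dvdp_mulr.
by rewrite dvdp_mull //; apply: dvdp_add; [rewrite dvdp_mull | rewrite dvdp_mulr].
Qed.

Lemma Xnsub1_sqfree (F : fieldType) (m : nat) (s : {poly F}) :
  m%:R != 0 :> F -> s * s %| 'X^m - 1 -> s %| 1.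
Proof.
move=> m_neq0 ss_N.
have m_gt0 : (0 < m)%N by case: m m_neq0 {ss_N} => //; rewrite eqxx.
have s_N : s %| 'X^m - 1 by apply: dvdp_trans ss_N; apply: dvdp_mulr.
have s_Xm : s %| 'X^(m.-1).
  move: (dvdp_deriv_sqr ss_N); rewrite derivB derivXn derivC subr0.
  by rewrite -scaler_nat dvdpZr.
have s_Xm1 : s %| 'X^m by rewrite -(prednK m_gt0) exprSr dvdp_mulr.
have -> : (1 : {poly F}) = 'X^m - ('X^m - 1) by ring.
exact: dvdp_sub.
Qed.

Lemma natr_neq0_coprime_card (F : finFieldType) (m : nat) :
  coprime #|F| m -> m%:R != 0 :> F.
Proof.
move=> cop_Fm; have [p p_prime p_char] := finPcharP F.
have p_F : (p %| #|F|)%N.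
  by rewrite (dvdn_pcharf p_char) -cardsT -zmodXgE (@expg_cardG _ [set: F]%G) ?inE.
apply: contraL p_prime; rewrite -(dvdn_pcharf p_char) => p_m.
have : (p %| gcdn #|F| m)%N by rewrite dvdn_gcd p_F p_m.
by rewrite (eqP cop_Fm) dvdn1 => /eqP ->.
Qed.

Lemma coprimep_div_gcdp_sqfree (F : fieldType) (p q : {poly F}) :
  (forall s, s * s %| q -> s %| 1) -> coprimep p (q %/ gcdp p q).
Proof.
move=> q_sqfree; rewrite coprimep_def -dvdp1; apply: q_sqfree.
set s := gcdp p _; set g := gcdp p q.
have s_g : s %| g.
  rewrite dvdp_gcd dvdp_gcdl (dvdp_trans (dvdp_gcdr _ _)) //.
  exact: divp_dvd (dvdp_gcdr _ _).
by rewrite -(divpK (dvdp_gcdr p q)) mulrC dvdp_mul // dvdp_gcdr.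
Qed.

Section HullVector.
Variables (F : fieldType) (m : nat) (g11 g12 g22 r : {poly F}).
Local Notation N := ('X^m - 1 : {poly F}).
Local Notation t := (N %/ r).
Local Notation a := (xinv m t).

Definition hull_vector : {poly F} * {poly F} := ((a * g11) %% N, (a * g12) %% N).

Lemma hull_vector_in_code : qc_code m g11 g12 g22 hull_vector.
Proof. by exists a, 0; rewrite mul0r addr0. Qed.

Hypotheses (m_gt0 : (0 < m)%N) (r_N : r %| N).

Lemma hull_vector_fst_eq0 : hull_vector.1 = 0 -> r %| xinv m g11.
Proof.
move=> /= v1_eq0.
have N_ag11 : N %| a * g11 by rewrite -(eqmodp_dvdp (modp_eqmodp _ _)) v1_eq0 dvdp0.
have N_tJ11 : N %| t * xinv m g11.
  rewrite -(eqmodp_dvdp (eqmodpM (xinvK_eqmodp m_gt0 t) (eqmodp_refl _ _))).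
  by rewrite -comp_polyM xinv_dvdp.
have t_neq0 : t != 0.
  by apply: contraNneq (Xnsub1_neq0 F m_gt0) => t0; rewrite -(divpK r_N) t0 mul0r.
by rewrite -(dvdp_mul2l _ _ t_neq0) divpK.
Qed.

Hypotheses (g11_small : (size g11 <= m.+1)%N) (g12_small : (size g12 <= m.+1)%N).
Hypotheses (r_g22 : r %| g22) (r_e : r %| g11 * polybar m g12 - g12 * polybar m g11).

Lemma hull_vector_orthogonal c : qc_code m g11 g12 g22 c -> sympl m c hull_vector = 0.
Proof.
case=> alpha [beta ->]; apply: sympl_eq0; rewrite ?size_modp_Xnsub1 //.
set J11 := xinv m g11; set J12 := xinv m g12.
have N_t x : r %| x -> N %| t * x by move=> r_x; rewrite -{1}(divpK r_N) dvdp_mul.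
have bar_hull w : polybar m ((a * w) %% N) = t * xinv m w %[modp N].
  apply: eqmodp_trans (polybar_eqmodp m_gt0 (leqW (size_modp_Xnsub1 m_gt0 _))) _.
  apply: eqmodp_trans (xinv_eqmodp (modp_eqmodp _ _)) _.
  by rewrite /xinv comp_polyM; apply: eqmodpM (xinvK_eqmodp m_gt0 t) (eqmodp_refl _ _).
have r_e' : r %| g11 * J12 - g12 * J11.
  rewrite -(dvdp_subr _ r_e) (dvdp_trans r_N) //.
  by apply: eqmodpB; apply: eqmodpMl; apply: polybar_eqmodp.
rewrite (eqmodp_dvdp (eqmodpB (eqmodpM (modp_eqmodp _ _) (bar_hull _))
                                (eqmodpM (modp_eqmodp _ _) (bar_hull _)))).
have -> : alpha * g11 * (t * J12) - (alpha * g12 + beta * g22) * (t * J11) =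
          alpha * (t * (g11 * J12 - g12 * J11)) - beta * J11 * (t * g22) by ring.
by rewrite dvdp_sub // dvdp_mull // N_t.
Qed.

End HullVector.

Theorem lemma5p5 (F : finFieldType) (m : nat) (g11 g12 g22 : {poly F}) :
  (0 < m)%N -> coprime #|F| m ->
  g11 %| 'X^m - 1 -> g22 %| 'X^m - 1 ->
  (size g12 < size g22)%N ->
  g11 * g22 %| ('X^m - 1) * g12 ->
  let g := gcdp g11 g22 in
  let l := ('X^m - 1) %/ lcmp g11 g22 in
  let g22' := g22 %/ g in
  let r22 := gcdp g22' (recip g22') in
  self_reciprocal g -> self_reciprocal l ->
  ~~ coprimep r22 (g11 * polybar m g12 - g12 * polybar m g11) ->
  ~ symplectic_LCD m (qc_code m g11 g12 g22).
Proof.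
move=> m_gt0 cop_Fm g11_N g22_N g12_small _ g l g22' r22 _ _.
rewrite coprimep_def size_poly_eq1 => r_nonconst LCD.
set r := gcdp r22 _ in r_nonconst.
have r_r22 : r %| r22 := dvdp_gcdl _ _.
have r_g22' : r %| g22' := dvdp_trans r_r22 (dvdp_gcdl _ _).
have g22'_g22 : g22' %| g22 := divp_dvd (dvdp_gcdr _ _).
have r_N : r %| 'X^m - 1 := dvdp_trans r_g22' (dvdp_trans g22'_g22 g22_N).
have small (f : {poly F}) : f %| 'X^m - 1 -> (size f <= m.+1)%N.
  by move=> f_N; rewrite -(size_Xnsub1 F m_gt0) dvdp_leq ?Xnsub1_neq0.
have [v1_eq0 _] := LCD _ (hull_vector_in_code _ _ _ _ r)
  (size_modp_Xnsub1 m_gt0 _) (size_modp_Xnsub1 m_gt0 _)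
  (hull_vector_orthogonal m_gt0 r_N (small _ g11_N)
     (leqW (leq_trans g12_small (small _ g22_N))) (dvdp_trans r_g22' g22'_g22)
     (dvdp_gcdr _ _)).
have r_J11 := hull_vector_fst_eq0 (g12 := g12) m_gt0 r_N v1_eq0.
have r_J22 := dvdp_xinv_recip m_gt0 (small _ (dvdp_trans g22'_g22 g22_N)) r_N
  (dvdp_trans r_r22 (dvdp_gcdr _ _)).
have cop_J : coprimep (xinv m g11) (xinv m g22').
  apply: coprimep_comp_poly; apply: coprimep_div_gcdp_sqfree => s ss_g22.
  exact: Xnsub1_sqfree (natr_neq0_coprime_card cop_Fm) (dvdp_trans ss_g22 g22_N).
by move/coprimepP: cop_J => /(_ r r_J11 r_J22); rewrite (negbTE r_nonconst).
Qed.
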